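(* Let $f\colon A\to B$ be a continuous, open and surjective ring homomorphism of Huber rings. Let $T=\{t_{1},\dots,t_{n}\}\subset A$ be elements generating the unit ideal of $A$, and let $s\in A$. Then the induced map of Huber rings \[h\colon A\Big\langle\frac{t_{1},\dots,t_{n}}{s}\Big\rangle\to B\Big\langle\frac{f(t_{1}),\dots,f(t_{n})}{f(s)}\Big\rangle\] is open and surjective.
   Context: Standing assumption: Huber rings are Hausdorff, complete and Tate. For a Huber ring $A$ with pair of definition $(A_0,I)$, elements $t_1,\dots,t_n$ generating the unit ideal and $s\in A$, the rational localization $A\langle\frac{t_1,\dots,t_n}{s}\rangle$ is the completion of $A[1/s]$ equipped with the Huber ring topology for which $(A_0[\frac{t_1}{s},\dots,\frac{t_n}{s}], I\cdot A_0[\frac{t_1}{s},\dots,\frac{t_n}{s}])$ is a pair of definition. Equivalently it is the quotient of $A\langle X_1,\dots,X_n\rangle$ by the closure of the ideal $(t_1-sX_1,\dots,t_n-sX_n)$. *)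

From HB Require Import structures.
From mathcomp Require Import all_boot all_order all_algebra.
From mathcomp Require Import all_classical all_reals all_analysis.
Set Implicit Arguments. Unset Strict Implicit. Unset Printing Implicit Defensive.
Import Order.TTheory GRing.Theory Num.Theory.
Local Open Scope classical_set_scope.
Local Open Scope ring_scope.

(* A commutative ring whose carrier carries a topology (no compatibility yet;
   the topological-ring axioms are part of [is_huber] below). *)
HB.structure Definition TopComRing := {R of Topological R & GRing.ComNzRing R}.

Section Huber.
Variable R : TopComRing.type.

Definition is_topological_ring : Prop :=
  [/\ continuous (fun z : R * R => z.1 + z.2),
      continuous (fun x : R => - x) &
      continuous (fun z : R * R => z.1 * z.2)].

Definition is_subring (A0 : set R) : Prop :=
  [/\ A0 1, forall x y, A0 x -> A0 y -> A0 (x - y) &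
      forall x y, A0 x -> A0 y -> A0 (x * y)].

Definition gen_ideal (A0 : set R) (gens : seq R) : set R :=
  [set x | exists c : seq R, size c = size gens /\ all (fun a => a \in A0) c /\
       x = \sum_(i < size gens) c`_i * gens`_i].

Fixpoint ideal_pow (A0 P : set R) (k : nat) : set R :=
  match k with
  | 0 => A0
  | k'.+1 => [set x | exists l : seq (R * R),
       (forall p, p \in l -> ideal_pow A0 P k' p.1 /\ P p.2) /\
       x = \sum_(p <- l) p.1 * p.2]
  end.

Definition pair_of_definition (A0 : set R) (gens : seq R) : Prop :=
  [/\ is_subring A0, open A0, all (fun g => g \in A0) gens,
      (forall k, nbhs (0 : R) (ideal_pow A0 (gen_ideal A0 gens) k)) &
      (forall U, nbhs (0 : R) U ->
         exists k, ideal_pow A0 (gen_ideal A0 gens) k `<=` U)].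

Definition group_cauchy (F : set_system R) : Prop :=
  forall U, nbhs (0 : R) U -> exists2 V, F V & forall x y, V x -> V y -> U (x - y).

Definition group_complete : Prop :=
  forall F : set_system R, ProperFilter F -> group_cauchy F ->
    exists l : R, F --> l.

Definition is_tate : Prop :=
  exists w : R, (exists v : R, w * v = 1) /\ (fun k : nat => w ^+ k) @ \oo --> (0 : R).

(* Huber ring, with the standing assumptions: Hausdorff, complete, Tate *)
Definition is_huber : Prop :=
  [/\ is_topological_ring,
      exists A0 gens, pair_of_definition A0 gens,
      hausdorff_space R, group_complete & is_tate].

(* a series is a coefficient function on monomials (exponent vectors) *)
Definition monomial (n : nat) := 'I_n -> nat.

Definition restricted (n : nat) (g : monomial n -> R) : Prop :=
  forall U, nbhs (0 : R) U -> finite_set [set m | ~ U (g m)].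

(* m - e_i (only used when m i > 0) *)
Definition mono_dec (n : nat) (i : 'I_n) (m : monomial n) : monomial n :=
  fun j => if j == i then (m j).-1 else m j.

(* coefficients of g * (c - d X_i) *)
Definition mul_lin (n : nat) (g : monomial n -> R) (c d : R) (i : 'I_n)
  : monomial n -> R :=
  fun m => c * g m - d * (if (0 < m i)%N then g (mono_dec i m) else 0).

(* the ideal (t_1 - s X_1, ..., t_n - s X_n) of R<X> *)
Definition rat_ideal (n : nat) (t : 'I_n -> R) (s : R) : set (monomial n -> R) :=
  [set h | exists G : 'I_n -> monomial n -> R, (forall i, restricted (G i)) /\
     h = fun m => \sum_(i < n) mul_lin (G i) (t i) s i m].

(* topology of R<X>: neighbourhoods of 0 are {g | all coefficients in U},
   U a neighbourhood of 0 in R (= I^k A0<X> for a pair of definition) *)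
Definition ps_open (n : nat) (W : set (monomial n -> R)) : Prop :=
  W `<=` @restricted n /\
  forall g, W g -> exists2 U, nbhs (0 : R) U &
    forall g', restricted g' -> (forall m, U (g' m - g m)) -> W g'.

Definition ps_closure (n : nat) (J : set (monomial n -> R)) : set (monomial n -> R) :=
  [set g | restricted g /\ forall U, nbhs (0 : R) U ->
     exists2 h, J h & forall m, U (g m - h m)].

(* congruence modulo the closed ideal cl(J) defining
   R<t_1..t_n / s> = R<X> / cl(t_i - s X_i) *)
Definition rat_equiv (n : nat) (t : 'I_n -> R) (s : R) (g g' : monomial n -> R) : Prop :=
  ps_closure (rat_ideal t s) (fun m => g m - g' m).

(* open subsets of R<t/s> (quotient topology) correspond to open subsets of
   R<X> saturated for rat_equiv *)
Definition rat_saturated (n : nat) (t : 'I_n -> R) (s : R) (W : set (monomial n -> R)) :=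
  forall g g', W g -> restricted g' -> rat_equiv t s g' g -> W g'.

End Huber.

(* The map h : A<t/s> -> B<f(t)/f(s)> induced by g |-> f o g on R<X>. *)
Definition ratloc_map_surjective (A B : TopComRing.type) (f : A -> B)
  (n : nat) (t : 'I_n -> A) (s : A) : Prop :=
  forall g : monomial n -> B, restricted g ->
    exists2 u : monomial n -> A, restricted u &
      rat_equiv (fun i => f (t i)) (f s) g (fun m => f (u m)).

(* h is open: the image of every open set of A<t/s> (= saturated open W of
   A<X>) is open in B<f(t)/f(s)>, i.e. its preimage in B<X> is open. *)
Definition ratloc_map_open (A B : TopComRing.type) (f : A -> B)
  (n : nat) (t : 'I_n -> A) (s : A) : Prop :=
  forall W : set (monomial n -> A), ps_open W -> rat_saturated t s W ->
    ps_open [set g | restricted g /\ exists2 u, W u &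
                rat_equiv (fun i => f (t i)) (f s) g (fun m => f (u m))].

(* The map h is induced by the coefficientwise map A<X> -> B<X> through the
   quotient maps, which are open and surjective, so it suffices to show that
   the coefficientwise map is open and surjective with control on the
   coefficients: every restricted family of elements of f(N), N a
   neighbourhood of 0 in A, lifts to a restricted family in N.  Choose a nonincreasing fundamental
   system Q_0 = N, Q_1, ... of neighbourhoods of 0 (the powers of the ideal
   of definition) and lift each coefficient y through the deepest f(Q_k)
   containing it; if y lies in every f(Q_k) it is 0 since B is Hausdorff, and
   we lift it to 0.  Since f is open each f(Q_k) is a neighbourhood of 0, so
   the lifted family again tends to 0. *)
From HB Require Import structures.
From mathcomp Require Import all_boot all_order all_algebra.
From mathcomp Require Import all_classical all_reals all_analysis.
Import Order.TTheory GRing.Theory Num.Theory.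
Local Open Scope classical_set_scope.
Local Open Scope ring_scope.

Set Implicit Arguments.
Unset Strict Implicit.

Section RestrictedSeries.
Variables (R : TopComRing.type) (n : nat).
Implicit Types g h : monomial n -> R.

Lemma restricted0 : restricted (fun _ : monomial n => 0 : R).
Proof.
move=> U U0; apply: sub_finite_set (finite_set0 _) => m /= nU.
by apply: nU; exact: nbhs_singleton U0.
Qed.

Hypothesis topR : is_topological_ring R.

Lemma restrictedD g h : restricted g -> restricted h ->
  restricted (fun m => g m + h m).
Proof.
case: topR => addR _ _ rg rh U U0.
have U00 : nbhs ((0 : R) + 0) U by rewrite addr0.
have [[P Q] /= [P0 Q0] PQ] := addR (0, 0) U U00.
apply: (@sub_finite_set _ _ ([set m | ~ P (g m)] `|` [set m | ~ Q (h m)])).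
  move=> m /= nU; apply/not_andP => -[Pg Qh].
  exact/nU/(PQ (g m, h m)).
by rewrite finite_setU; split; [exact: rg | exact: rh].
Qed.

Lemma restrictedN g : restricted g -> restricted (fun m => - g m).
Proof.
case: topR => _ oppR _ rg U U0.
have U00 : nbhs (- (0 : R)) U by rewrite oppr0.
exact: sub_finite_set (rg _ (oppR 0 U U00)).
Qed.

Lemma restrictedB g h : restricted g -> restricted h ->
  restricted (fun m => g m - h m).
Proof. by move=> rg rh; apply: restrictedD => //; exact: restrictedN. Qed.

End RestrictedSeries.

Section RationalEquivalence.
Variables (R : TopComRing.type) (n : nat) (t : 'I_n -> R) (s : R).
Implicit Types g h : monomial n -> R.

Lemma ps_closure_rat_ideal0 : ps_closure (rat_ideal t s) (fun _ => 0).
Proof.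
split=> [|U U0]; first exact: restricted0.
exists (fun _ => 0); last by move=> m; rewrite subr0; exact: nbhs_singleton.
exists (fun _ _ => 0); split=> [i|]; first exact: restricted0.
apply/funext => m; rewrite big1 // => i _.
by rewrite /mul_lin if_same !mulr0 subr0.
Qed.

Lemma rat_equiv_refl g : rat_equiv t s g g.
Proof.
rewrite /rat_equiv (_ : (fun m => _) = fun _ => 0); last first.
  by apply/funext => m; rewrite subrr.
exact: ps_closure_rat_ideal0.
Qed.

Lemma rat_equiv_diff g1 g2 h1 h2 :
  (forall m, g1 m - g2 m = h1 m - h2 m) ->
  rat_equiv t s h1 h2 -> rat_equiv t s g1 g2.
Proof. by move=> /funext eq_diff; rewrite /rat_equiv eq_diff. Qed.

End RationalEquivalence.

Definition nbhs0_base (R : TopComRing.type) (P : nat -> set R) : Prop :=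
  (forall k, nbhs 0 (P k)) /\ (forall U, nbhs 0 U -> exists k, P k `<=` U).

Lemma pair_of_definition_nbhs0_base (R : TopComRing.type) (A0 : set R) gens :
  pair_of_definition A0 gens ->
  nbhs0_base (ideal_pow A0 (gen_ideal A0 gens)).
Proof. by case. Qed.

Lemma nbhs0_base_nonincreasing (R : TopComRing.type) (P : nat -> set R)
    (N : set R) :
  nbhs0_base P -> nbhs 0 N ->
  exists Q : nat -> set R, [/\ nbhs0_base Q, Q 0%N = N &
    forall j k, (j <= k)%N -> Q k `<=` Q j].
Proof.
move=> [P0 Pbase] N0.
pose Q := fix Q k := if k is k'.+1 then Q k' `&` P k' else N.
exists Q; split=> //; first split.
- by elim=> //= k Qk; apply: filterI.
- by move=> U /Pbase [k PU]; exists k.+1 => x [_ /PU].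
- move=> j k /subnK <-; elim: (k - j)%N => // i IHi x [Qx _].
  exact: IHi.
Qed.

Section Lifting.
Variables (A B : TopComRing.type) (f : {rmorphism A -> B}).
Hypotheses (f_cont : continuous f) (f_open : forall U, open U -> open (f @` U)).
Hypothesis sepB : hausdorff_space B.

Lemma image_nbhs0 (N : set A) : nbhs 0 N -> nbhs 0 (f @` N).
Proof.
rewrite !nbhsE; case=> O [oO O0] ON; exists (f @` O).
  by split; [exact: f_open | exists 0; rewrite ?rmorph0].
by move=> _ [x Ox <-]; exists x; first exact: ON.
Qed.

Lemma preimage_nbhs0 (V : set B) : nbhs 0 V -> nbhs 0 (f @^-1` V).
Proof. by rewrite -{1}(rmorph0 f); exact: f_cont. Qed.

Section Base.
Variable Q : nat -> set A.
Hypotheses (Qbase : nbhs0_base Q) (Q_nonincr : forall j k, (j <= k)%N -> Q k `<=` Q j).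

Lemma in_all_images_eq0 (y : B) : (forall k, (f @` Q k) y) -> y = 0.
Proof.
move=> yQ; apply/esym/sepB => U V U0 Vy.
exists y; split; last exact: nbhs_singleton.
have [k QU] := Qbase.2 _ (preimage_nbhs0 U0).
by have [x /QU Ux <-] := yQ k.
Qed.

Lemma lift_through_base (y : B) : (f @` Q 0%N) y ->
  exists x, f x = y /\ forall j, (f @` Q j) y -> Q j x.
Proof.
move=> yQ0; have [yQ|/existsNP [j nyQj]] := pselect (forall k, (f @` Q k) y).
  exists 0; rewrite rmorph0 (in_all_images_eq0 yQ); split=> // j _.
  exact: nbhs_singleton (Qbase.1 j).
have [k [[x Qkx fx] nyQk1]] : exists k, (f @` Q k) y /\ ~ (f @` Q k.+1) y.
  apply: contrapT => no_step; apply: nyQj; elim: j => // j yQj.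
  by apply: contrapT => nyQj1; apply: no_step; exists j.
exists x; split=> // i [z Qiz fz].
have [ik|ki] := leqP i k; first exact: Q_nonincr ik _ Qkx.
by exfalso; apply: nyQk1; exists z; [exact: Q_nonincr ki _ Qiz | ].
Qed.

Lemma restricted_lift_base n (g : monomial n -> B) :
  restricted g -> (forall m, (f @` Q 0%N) (g m)) ->
  exists2 u : monomial n -> A, restricted u &
    forall m, f (u m) = g m /\ Q 0%N (u m).
Proof.
move=> rg gQ0.
have [u hu] := choice (fun m => lift_through_base (gQ0 m)).
exists u => [U U0|m]; last by split; [exact: (hu m).1 | exact: (hu m).2 _ (gQ0 m)].
have [k QU] := Qbase.2 U U0.
apply: sub_finite_set (rg _ (image_nbhs0 (Qbase.1 k))) => m /= nUu gQk.
exact/nUu/QU/(hu m).2.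
Qed.

End Base.

Hypothesis baseA : exists P : nat -> set A, nbhs0_base P.

Lemma restricted_lift n (N : set A) (g : monomial n -> B) :
  nbhs 0 N -> restricted g -> (forall m, (f @` N) (g m)) ->
  exists2 u : monomial n -> A, restricted u & forall m, f (u m) = g m /\ N (u m).
Proof.
move=> N0 rg gN; have [P Pbase] := baseA.
have [Q [Qbase QN Q_nonincr]] := nbhs0_base_nonincreasing Pbase N0.
by rewrite -QN in gN *; exact: restricted_lift_base.
Qed.

Lemma ratloc_map_surjective_lift n (t : 'I_n -> A) (s : A) :
  (forall y : B, exists x : A, f x = y) -> ratloc_map_surjective f t s.
Proof.
move=> f_surj g rg.
have gT m : (f @` setT) (g m) by have [x fx] := f_surj (g m); exists x.
have [u ru fu] := restricted_lift filterT rg gT.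
exists u => //; have -> : g = (fun m => f (u m)).
  by apply/funext => m; rewrite (fu m).1.
exact: rat_equiv_refl.
Qed.

Hypotheses (topA : is_topological_ring A) (topB : is_topological_ring B).

(* A neighbourhood U controlling W around u yields the neighbourhood f(U)
   around g: lift the difference g' - g into U and add it to u. *)
Lemma ratloc_map_open_lift n (t : 'I_n -> A) (s : A) : ratloc_map_open f t s.
Proof.
move=> W [Wr Wo] _; split=> [g [] //|g [rg [u Wu gu]]].
have [U U0 UW] := Wo u Wu.
exists (f @` U) => [|g' rg' g'U]; first exact: image_nbhs0.
split=> //; have [d rd fd] := restricted_lift U0 (restrictedB topB rg' rg) g'U.
exists (fun m => u m + d m).
  apply: UW => [|m]; first exact: (restrictedD topA (Wr u Wu) rd).
  by rewrite addrAC subrr add0r; exact: (fd m).2.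
apply: rat_equiv_diff gu => m.
by rewrite rmorphD (fd m).1 addrCA opprD addrA subrr add0r opprB.
Qed.

End Lifting.

Theorem proposition2p12 (A B : TopComRing.type) (f : {rmorphism A -> B})
  (n : nat) (t : 'I_n -> A) (s : A) :
  is_huber A -> is_huber B ->
  continuous f ->
  (forall U : set A, open U -> open (f @` U)) ->
  (forall y : B, exists x : A, f x = y) ->
  (exists a : 'I_n -> A, \sum_(i < n) a i * t i = 1) ->
  ratloc_map_open f t s /\ ratloc_map_surjective f t s.
Proof.
move=> [topA [A0 [gens defA]] _ _ _] [topB _ sepB _ _] f_cont f_open f_surj _.
have baseA : exists P : nat -> set A, nbhs0_base P.
  by exists (ideal_pow A0 (gen_ideal A0 gens)); exact: pair_of_definition_nbhs0_base.
split; first exact: ratloc_map_open_lift.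
exact: ratloc_map_surjective_lift.
Qed.
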